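(* Let $\epsilon>0$, let $q$ be a positive integer, and let $\Lambda_\epsilon$ be an $\epsilon$-lattice. There is a (randomized) function $Q_{\epsilon,q}:\mathbb{R}^d\to\{0,1\}^b$, with $b=d\log q$, mapping each $\mathbf{x}\in\mathbb{R}^d$ to a string $Q_{\epsilon,q}(\mathbf{x})$ which specifies a subset $\Lambda'_\epsilon\subset\Lambda_\epsilon$ with the following properties: there exists $\mathbf{z}\in\Lambda'_\epsilon$ such that $\mathbf{z}$ is an unbiased estimator of $\mathbf{x}$ (i.e. $\mathbb{E}[\mathbf{z}]=\mathbf{x}$) with $\|\mathbf{z}-\mathbf{x}\|<7\epsilon$, and for all $\mathbf{w}\in\Lambda'_\epsilon\setminus\{\mathbf{z}\}$, $\|\mathbf{z}-\mathbf{w}\|\ge 2q\epsilon$.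
   Context: $\|\cdot\|$ is a fixed one of the $\ell_1,\ell_2,\ell_\infty$ norms. A lattice is the set of integer combinations of a basis of $\mathbb{R}^d$. Its packing radius $r_p$ is the supremum of $r$ such that balls of radius $r$ around distinct lattice points are disjoint; its cover radius $r_c$ is the infimum of $r$ such that balls of radius $r$ around lattice points cover $\mathbb{R}^d$. An $\epsilon$-lattice is a lattice with $\epsilon=r_p\le r_c\le3\epsilon$. *)

From HB Require Import structures.
From mathcomp Require Import all_boot all_order all_algebra.
From mathcomp Require Import boolp classical_sets reals.
Set Implicit Arguments. Unset Strict Implicit. Unset Printing Implicit Defensive.
Import Order.TTheory GRing.Theory Num.Theory.
Local Open Scope classical_set_scope.
Local Open Scope ring_scope.

Inductive normKind := L1 | L2 | Linf.

Definition vnorm {R : realType} (nk : normKind) {d : nat} (v : 'rV[R]_d) : R :=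
  match nk with
  | L1 => \sum_(i < d) `|v ord0 i|
  | L2 => Num.sqrt (\sum_(i < d) v ord0 i ^+ 2)
  | Linf => \big[Num.max/0]_(i < d) `|v ord0 i|
  end.

Definition lattice {R : realType} {d : nat} (B : 'M[R]_d) : set 'rV[R]_d :=
  [set z | exists k : 'rV[int]_d, z = map_mx (fun n : int => n%:~R) k *m B].

Definition packing_radius {R : realType} (nk : normKind) {d : nat} (B : 'M[R]_d) : R :=
  sup [set r : R | 0 < r /\
    forall u v : 'rV[R]_d, lattice B u -> lattice B v -> u != v ->
      forall y : 'rV[R]_d, ~ (vnorm nk (y - u) <= r /\ vnorm nk (y - v) <= r)].

Definition cover_radius {R : realType} (nk : normKind) {d : nat} (B : 'M[R]_d) : R :=
  inf [set r : R | 0 <= r /\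
    forall y : 'rV[R]_d, exists u, lattice B u /\ vnorm nk (y - u) <= r].

Definition eps_lattice {R : realType} (nk : normKind) {d : nat} (B : 'M[R]_d) (eps : R) : Prop :=
  B \in unitmx /\ packing_radius nk B = eps /\
  eps <= cover_radius nk B /\ cover_radius nk B <= 3 * eps.

(* Number of bits: b = ceil(d log2 q), the least b with q^d <= 2^b. *)
Definition nbits (d q : nat) : nat := up_log 2 (q ^ d).

(* A finitely supported probability distribution given as a weighted list. *)
Definition is_distr {T : eqType} {R : realType} (s : seq (R * T)) : Prop :=
  (forall o, o \in s -> 0 <= o.1) /\ \sum_(o <- s) o.1 = 1.

From HB Require Import structures.
From mathcomp Require Import all_boot all_order all_algebra.
From mathcomp Require Import boolp classical_sets reals topology normedtype derive.
From mathcomp Require Import ring lra zify.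
Import Order.TTheory GRing.Theory Num.Theory.
Import numFieldNormedType.Exports.
Local Open Scope classical_set_scope.
Local Open Scope ring_scope.
Set Implicit Arguments. Unset Strict Implicit. Unset Printing Implicit Defensive.

(* The quantizer rounds x at random to a lattice point z with mean x and sends
   only the residues modulo q of the integer coordinates of z; the decoded set
   is the coset z + qΛ, whose distinct points differ by q times a nonzero
   lattice vector, hence are at least 2qε apart.
   Unbiased rounding is possible because x lies in the convex hull of the
   lattice points of its open 7ε-ball. Otherwise Gordan's alternative gives u
   with <u, z - x> < 0 for all of them; but if v has norm at most 1 and norms u
   (|<u, w>| <= <u, v> ‖w‖), a lattice point z within the cover radius 3ε < 7ε/2
   of y = x + (7ε/2) v lies in the ball and has
   <u, z - x> >= <u, v> (7ε/2 - ‖z - y‖) >= 0. *)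

Section DotProduct.
Variables (R : realType) (d : nat).
Implicit Types (u v w : 'rV[R]_d).

Definition dot u v : R := \sum_(i < d) u ord0 i * v ord0 i.

Lemma dotC u v : dot u v = dot v u.
Proof. by apply: eq_bigr => i _; rewrite mulrC. Qed.

Lemma dot0l v : dot 0 v = 0.
Proof. by rewrite /dot big1 // => i _; rewrite mxE mul0r. Qed.

Lemma dotNl u v : dot (- u) v = - dot u v.
Proof. by rewrite /dot -sumrN; apply: eq_bigr => i _; rewrite mxE mulNr. Qed.

Lemma dotDr u v w : dot u (v + w) = dot u v + dot u w.
Proof. by rewrite /dot -big_split; apply: eq_bigr => i _; rewrite mxE mulrDr. Qed.

Lemma dotBr u v w : dot u (v - w) = dot u v - dot u w.
Proof. by rewrite /dot -sumrB; apply: eq_bigr => i _; rewrite !mxE mulrBr. Qed.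

Lemma dotZr u a v : dot u (a *: v) = a * dot u v.
Proof. by rewrite /dot mulr_sumr; apply: eq_bigr => i _; rewrite mxE mulrCA. Qed.

Lemma dot_quad u v t :
  dot (u + t *: v) (u + t *: v) = dot u u + 2 * t * dot u v + t ^+ 2 * dot v v.
Proof.
by rewrite /dot !mulr_sumr -!big_split; apply: eq_bigr => i _; rewrite !mxE /=; ring.
Qed.

Lemma dot_ge0 u : 0 <= dot u u.
Proof. by apply: sumr_ge0 => i _; rewrite -expr2 sqr_ge0. Qed.

Lemma dot_gt0 u : u != 0 -> 0 < dot u u.
Proof.
move=> u_neq0; have [i ui_neq0] : exists i, u ord0 i != 0.
  apply/existsP; apply: contraR u_neq0 => /existsPn u0.
  by apply/eqP/rowP => i; rewrite mxE; apply/eqP/negPn.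
rewrite /dot (bigD1 i) //= -expr2 ltr_pwDl ?exprn_even_gt0 //.
by apply: sumr_ge0 => j _; rewrite -expr2 sqr_ge0.
Qed.

Lemma cauchy_schwarz u v : dot u v ^+ 2 <= dot u u * dot v v.
Proof.
have [->|u_neq0] := eqVneq u 0; first by rewrite !dot0l expr0n mul0r.
have uu_gt0 := dot_gt0 u_neq0.
have := dot_ge0 (v + (- dot u v / dot u u) *: u).
rewrite dot_quad (dotC v u) => H; rewrite -subr_ge0.
suff -> : dot u u * dot v v - dot u v ^+ 2
  = dot u u * (dot v v + 2 * (- dot u v / dot u u) * dot u v
               + (- dot u v / dot u u) ^+ 2 * dot u u) by exact: mulr_ge0 (ltW uu_gt0) H.
by field; rewrite gt_eqF.
Qed.

Lemma cauchy_schwarz_sqrt u v :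
  `|dot u v| <= Num.sqrt (dot u u) * Num.sqrt (dot v v).
Proof.
rewrite -sqrtrM ?dot_ge0 // -sqrtr_sqr ler_sqrt ?cauchy_schwarz //.
by rewrite mulr_ge0 ?dot_ge0.
Qed.

Lemma sqrt_dotD u v :
  Num.sqrt (dot (u + v) (u + v)) <= Num.sqrt (dot u u) + Num.sqrt (dot v v).
Proof.
rewrite -[leRHS]ger0_norm ?addr_ge0 ?sqrtr_ge0 // -sqrtr_sqr ler_sqrt ?sqr_ge0 //.
rewrite sqrrD !sqr_sqrtr ?dot_ge0 // -[v in u + v]scale1r dot_quad expr1n mul1r mulr1.
have := cauchy_schwarz_sqrt u v; have := ler_norm (dot u v); rewrite mulr2n; lra.
Qed.

Lemma norm_dot_le u v : `|dot u v| <= \sum_i `|u ord0 i| * `|v ord0 i|.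
Proof.
rewrite (le_trans (ler_norm_sum _ _ _)) //.
by apply: ler_sum => i _; rewrite normrM.
Qed.

End DotProduct.

Section Norms.
Variables (R : realType) (d : nat).
Implicit Types (u v w : 'rV[R]_d).

Lemma vnorm_ge0 nk v : 0 <= vnorm nk v.
Proof. by case: nk => /=; [exact: sumr_ge0 | exact: sqrtr_ge0 | exact: bigmax_ge_id]. Qed.

Lemma vnormZ nk a v : vnorm nk (a *: v) = `|a| * vnorm nk v.
Proof.
case: nk => /=.
- by rewrite mulr_sumr; apply: eq_bigr => i _; rewrite mxE normrM.
- rewrite -sqrtr_sqr -sqrtrM ?sqr_ge0 // mulr_sumr; congr Num.sqrt.
  by apply: eq_bigr => i _; rewrite mxE exprMn.
- elim/big_ind2: _ => [|x1 x2 y1 y2 -> ->|i _]; first by rewrite mulr0.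
    by rewrite maxr_pMr.
  by rewrite mxE normrM.
Qed.

Lemma vnormN nk v : vnorm nk (- v) = vnorm nk v.
Proof. by rewrite -scaleN1r vnormZ normrN1 mul1r. Qed.

Lemma vdistC nk u v : vnorm nk (u - v) = vnorm nk (v - u).
Proof. by rewrite -vnormN opprB. Qed.

Lemma coord_le_vnorm nk v i : `|v ord0 i| <= vnorm nk v.
Proof.
case: nk => /=.
- by rewrite (bigD1 i) //= lerDl; apply: sumr_ge0.
- rewrite -sqrtr_sqr ler_sqrt; last by apply: sumr_ge0 => j _; exact: sqr_ge0.
  by rewrite (bigD1 i) //= lerDl; apply: sumr_ge0 => j _; exact: sqr_ge0.
- exact: le_bigmax.
Qed.

Lemma vnorm_L2E v : vnorm L2 v = Num.sqrt (dot v v).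
Proof. by congr Num.sqrt; apply: eq_bigr => i _; rewrite expr2. Qed.

Lemma vnormD nk u v : vnorm nk (u + v) <= vnorm nk u + vnorm nk v.
Proof.
case: nk.
- by rewrite /= -big_split; apply: ler_sum => i _; rewrite mxE ler_normD.
- by rewrite !vnorm_L2E sqrt_dotD.
apply: bigmax_le => [|i _]; first by rewrite addr_ge0 ?bigmax_ge_id.
by rewrite mxE (le_trans (ler_normD _ _)) // lerD ?(coord_le_vnorm Linf).
Qed.

Lemma dual_vector_L1 u :
  exists2 v, vnorm L1 v <= 1 & forall w, `|dot u w| <= dot u v * vnorm L1 w.
Proof.
case: d u => [|n] u.
  by exists 0 => [|w]; rewrite /dot /= !big_ord0 ?ler01 ?normr0 ?mul0r.
have [i0 _ max_i0] := @eq_bigmax _ R _ 0 ord0 predT (fun i => `|u ord0 i|) isT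
  (fun i _ => normr_ge0 _).
pose v : 'rV[R]_n.+1 := \row_i (if i == i0 then Num.sg (u ord0 i0) else 0).
have v_i0 i : i != i0 -> v ord0 i = 0 by rewrite mxE => /negbTE ->.
exists v => [|w].
  rewrite /= (bigD1 i0) //= big1 => [|i /v_i0 ->]; last by rewrite normr0.
  by rewrite addr0 mxE eqxx normr_sg; case: (_ != 0).
have -> : dot u v = `|u ord0 i0|.
  rewrite /dot (bigD1 i0) //= big1 => [|i /v_i0 ->]; last by rewrite mulr0.
  by rewrite addr0 mxE eqxx mulrC -normrEsg.
rewrite (le_trans (norm_dot_le u w)) //= mulr_sumr; apply: ler_sum => i _.
by rewrite ler_wpM2r // -max_i0 (le_bigmax _ _ i).
Qed.

Lemma dual_vector_L2 u :
  exists2 v, vnorm L2 v <= 1 & forall w, `|dot u w| <= dot u v * vnorm L2 w.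
Proof.
set s := Num.sqrt (dot u u).
have uu : dot u u = s ^+ 2 by rewrite sqr_sqrtr ?dot_ge0.
exists (s^-1 *: u) => [|w].
  rewrite vnormZ vnorm_L2E -/s ger0_norm ?invr_ge0 ?sqrtr_ge0 //.
  by have [->|s_neq0] := eqVneq s 0; rewrite ?invr0 ?mul0r ?mulVf.
rewrite dotZr uu vnorm_L2E.
have -> : s^-1 * s ^+ 2 = s.
  by have [->|s_neq0] := eqVneq s 0; rewrite ?invr0 ?mul0r // expr2 mulKf.
exact: cauchy_schwarz_sqrt.
Qed.

Lemma dual_vector_Linf u :
  exists2 v, vnorm Linf v <= 1 & forall w, `|dot u w| <= dot u v * vnorm Linf w.
Proof.
exists (\row_i Num.sg (u ord0 i)) => [|w].
  by apply: bigmax_le => // i _; rewrite mxE normr_sg; case: (_ != 0).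
have -> : dot u (\row_i Num.sg (u ord0 i)) = \sum_i `|u ord0 i|.
  by apply: eq_bigr => i _; rewrite mxE mulrC -normrEsg.
rewrite (le_trans (norm_dot_le u w)) // mulr_suml; apply: ler_sum => i _.
by rewrite ler_wpM2l ?(coord_le_vnorm Linf).
Qed.

Lemma dual_vector nk u : exists v,
  [/\ vnorm nk v <= 1, 0 <= dot u v & forall w, `|dot u w| <= dot u v * vnorm nk w].
Proof.
have [v v_le1 v_dual] :
    exists2 v, vnorm nk v <= 1 & forall w, `|dot u w| <= dot u v * vnorm nk w.
  by case: nk; [exact: dual_vector_L1 | exact: dual_vector_L2 | exact: dual_vector_Linf].
exists v; split=> //.
have := v_dual v; have := vnorm_ge0 nk v; have := ler_norm (- dot u v).
rewrite normrN; nra.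
Qed.

End Norms.

Lemma quadratic_ge0_slope_ge0 (R : realFieldType) (D E : R) : 0 <= E ->
  (forall t, 0 < t <= 1 -> 0 <= 2 * t * D + t ^+ 2 * E) -> 0 <= D.
Proof.
move=> E_ge0 quad_ge0; rewrite leNgt; apply/negP => D_lt0.
(* at this t the quadratic equals t D (1 + t) < 0 *)
pose t := - D / (E - D).
have ED_gt0 : 0 < E - D by lra.
have t_gt0 : 0 < t by rewrite divr_gt0 ?oppr_gt0.
have t_le1 : t <= 1 by rewrite ler_pdivrMr // mul1r; lra.
have tE : t * E = t * D - D.
  have := divfK (lt0r_neq0 ED_gt0) (- D); rewrite -/t mulrBr; lra.
have tD_lt0 : t * D < 0 by rewrite pmulr_rlt0.
have := quad_ge0 t; rewrite t_gt0 t_le1 => /(_ isT).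
have -> : 2 * t * D + t ^+ 2 * E = t * D * (1 + t).
  by rewrite expr2 -[t * t * E]mulrA tE; ring.
nra.
Qed.

Section Simplex.
Variable R : realType.

Definition simplex n : set 'rV[R]_n :=
  [set w | (forall i, `[0, 1]%classic (w ord0 i)) /\ \sum_i w ord0 i = 1].
Arguments simplex : clear implicits.

Lemma simplex_compact n : compact (simplex n).
Proof.
apply: compact_closedI.
  exact: (@rV_compact R n (fun=> `[0, 1]%classic) (fun=> @segment_compact R 0 1)).
apply: (@preimage_closed _ _ (fun w : 'rV[R]_n => \sum_i w ord0 i) [set x | x = 1]).
  move=> w _; apply: continuous_big; first exact: add_continuous.
  by move=> i _; exact: coord_continuous.
exact: closed_eq.
Qed.

Lemma simplex_delta n j : simplex n 'e_j.
Proof.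
split=> [i|]; first by rewrite mxE eqxx /= in_itv /=; case: (i == j); rewrite ?lexx ?ler01.
rewrite (bigD1 j) //= big1 => [|i /negbTE ij]; first by rewrite mxE !eqxx addr0.
by rewrite mxE ij andbF.
Qed.

Lemma simplex_convex n w1 w2 t : simplex n w1 -> simplex n w2 -> 0 <= t -> t <= 1 ->
  simplex n (w1 + t *: (w2 - w1)).
Proof.
move=> [w1_01 w1_sum] [w2_01 w2_sum] t_ge0 t_le1; split=> [i|].
  move: (w1_01 i) (w2_01 i); rewrite /= !in_itv /= !mxE => /andP[? ?] /andP[? ?].
  by apply/andP; split; nra.
under eq_bigr do rewrite !mxE.
by rewrite big_split /= -mulr_sumr sumrB w1_sum w2_sum subrr mulr0 addr0.
Qed.

End Simplex.

Lemma mulmx_sqnorm_continuous (R : realType) n d (A : 'M[R]_(n, d)) :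
  continuous (fun w : 'rV[R]_n => dot (w *m A) (w *m A)).
Proof.
have coord_cont k : continuous (fun w : 'rV[R]_n => (w *m A) ord0 k).
  have -> : (fun w : 'rV[R]_n => (w *m A) ord0 k) = (fun w => \sum_i w ord0 i * A i k).
    by apply/funext => w; rewrite mxE.
  apply: continuous_big; first exact: add_continuous.
  by move=> i _ w; apply: continuousM; [exact: coord_continuous | exact: cst_continuous].
apply: continuous_big; first exact: add_continuous.
by move=> k _ w; apply: continuousM; exact: coord_cont.
Qed.

Lemma gordan (R : realType) d n (a : 'I_n -> 'rV[R]_d) :
  (exists w : 'I_n -> R,
     [/\ forall i, 0 <= w i, \sum_i w i = 1 & \sum_i w i *: a i = 0])
  \/ exists u, forall i, dot u (a i) < 0.
Proof.
case: n a => [|n] a; first by right; exists 0 => -[].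
pose A := \matrix_i a i.
have [ws /set_mem ws_simplex ws_min] := compact_EVT_min (ex_intro _ _ (simplex_delta R ord0))
  (@simplex_compact R n.+1) (continuous_subspaceT (mulmx_sqnorm_continuous (A := A))).
set p := ws *m A.
have [p0|p_neq0] := eqVneq p 0.
  have [ws01 ws_sum] := ws_simplex; left; exists (fun i => ws ord0 i); split=> //.
    by move=> i; have := ws01 i; rewrite /= in_itv /= => /andP[].
  by rewrite -[RHS]p0 /p mulmx_sum_row; under [RHS]eq_bigr do rewrite rowK.
right; exists (- p) => j.
(* p is the point of least Euclidean norm in the convex hull of the a i, so
   moving from p towards a j does not decrease the norm. *)
have variation : 0 <= dot p (a j - p).
  apply: (quadratic_ge0_slope_ge0 (dot_ge0 (a j - p))) => t /andP[t_gt0 t_le1].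
  have := ws_min _ (mem_set (simplex_convex ws_simplex (simplex_delta R j) (ltW t_gt0) t_le1)).
  by rewrite mulmxDl -scalemxAl mulmxBl -rowE rowK -/p dot_quad -addrA lerDl.
rewrite dotNl oppr_lt0 (lt_le_trans (dot_gt0 p_neq0)) //.
by rewrite -subr_ge0 -dotBr.
Qed.

Lemma int_box_finite d (N : nat) : exists s : seq 'rV[int]_d,
  forall k : 'rV[int]_d, (forall i, `|k ord0 i| <= N%:Z) -> k \in s.
Proof.
pose shift (f : {ffun 'I_d -> 'I_(N + N).+1}) : 'rV[int]_d := \row_i ((f i)%:Z - N%:Z).
exists (map shift (enum {ffun 'I_d -> 'I_(N + N).+1})) => k k_le.
have k_lt i : (absz (k ord0 i + N%:Z)%R < (N + N).+1)%N by move: (k_le i); lia.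
apply/mapP; exists [ffun i => Ordinal (k_lt i)]; first by rewrite mem_enum.
apply/rowP => i; rewrite !mxE ffunE -[k 0 i]/(k ord0 i) /=; move: (k_le i); lia.
Qed.

Lemma bits_embedding (T : finType) b :
  (#|T| <= 2 ^ b)%N -> exists f : T -> b.-tuple bool, injective f.
Proof.
move=> card_T; have le_card : (#|T| <= #|{: b.-tuple bool}|)%N.
  by rewrite card_tuple card_bool.
exists (fun x => enum_val (widen_ord le_card (enum_rank x))).
by move=> x y /enum_val_inj /(congr1 val) /= /val_inj /enum_rank_inj.
Qed.

Section Residues.
Variables (d q : nat).
Hypothesis q_gt0 : (0 < q)%N.

Lemma modz_lt (z : int) : (absz (modz z q) < q)%N.
Proof.
have := modz_ge0 z (_ : q%:Z != 0); have := ltz_pmod z (_ : 0 < q%:Z).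
by rewrite ltz_nat eqz_nat -lt0n q_gt0; lia.
Qed.

Definition residue (k : 'rV[int]_d) : {ffun 'I_d -> 'I_q} :=
  [ffun i => Ordinal (modz_lt (k ord0 i))].

Lemma residue_eq k k' :
  residue k = residue k' -> exists m : 'rV[int]_d, k - k' = q%:Z *: m.
Proof.
move=> res_eq; exists (\row_i (divz (k ord0 i) q - divz (k' ord0 i) q)).
apply/rowP => i; rewrite !mxE -[k 0 i]/(k ord0 i) -[k' 0 i]/(k' ord0 i).
have := congr1 (fun f : {ffun 'I_d -> 'I_q} => val (f i)) res_eq.
rewrite /= !ffunE /= => abs_eq.
have q_neq0 : q%:Z != 0 by rewrite eqz_nat -lt0n.
have mod_eq : modz (k ord0 i) q = modz (k' ord0 i) q.
  by move: (modz_ge0 (k ord0 i) q_neq0) (modz_ge0 (k' ord0 i) q_neq0); lia.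
rewrite [in LHS](divz_eq (k ord0 i) q%:Z) [in LHS](divz_eq (k' ord0 i) q%:Z) mod_eq.
ring.
Qed.

End Residues.

Section Lattice.
Variables (R : realType) (d : nat) (nk : normKind) (B : 'M[R]_d).

Definition lattice_point (k : 'rV[int]_d) : 'rV[R]_d :=
  map_mx intr k *m B.

Lemma lattice_point_in k : lattice B (lattice_point k).
Proof. by exists k. Qed.

Lemma lattice_point0 : lattice_point 0 = 0.
Proof. by rewrite /lattice_point map_mx0 mul0mx. Qed.

Lemma lattice_pointB k k' : lattice_point (k - k') = lattice_point k - lattice_point k'.
Proof. by rewrite /lattice_point map_mxB mulmxBl. Qed.

Lemma lattice_pointZ (c : int) k : lattice_point (c *: k) = c%:~R *: lattice_point k.
Proof. by rewrite /lattice_point map_mxZ scalemxAl. Qed.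

Lemma packing_radius_le_dist u v : lattice B u -> lattice B v -> u != v ->
  2 * packing_radius nk B <= vnorm nk (u - v).
Proof.
move=> u_in v_in u_neq_v; rewrite /packing_radius; set P := (X in sup X).
have P_ub : ubound P (vnorm nk (u - v) / 2).
  move=> r [_ disjoint_balls]; rewrite leNgt; apply/negP => lt_r.
  apply: (disjoint_balls u v u_in v_in u_neq_v (u + 2^-1 *: (v - u))); split.
    by rewrite addrC addKr vnormZ vdistC ger0_norm ?invr_ge0 // mulrC ltW.
  have -> : u + 2^-1 *: (v - u) - v = 2^-1 *: (u - v).
    by apply/rowP => i; rewrite !mxE; field.
  by rewrite vnormZ ger0_norm ?invr_ge0 // mulrC ltW.
rewrite mulrC -ler_pdivlMr //.
have [P0|P_empty] := pselect (P !=set0); first exact: ge_sup.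
by rewrite sup_out ?divr_ge0 ?vnorm_ge0 // => -[].
Qed.

Lemma approx_within_cover_radius r : 0 < cover_radius nk B -> cover_radius nk B < r ->
  forall y, exists2 u, lattice B u & vnorm nk (y - u) < r.
Proof.
rewrite /cover_radius; set C := (X in inf X) => cover_gt0 cover_lt y.
have [C_inf|/inf_out C0] := pselect (has_inf C); last by move: cover_gt0; rewrite C0 ltxx.
have r_gap : 0 < r - inf C by rewrite subr_gt0.
have [s [_ s_covers] s_lt_r] := inf_adherent r_gap C_inf.
rewrite addrC subrK in s_lt_r.
have [u [u_in u_near]] := s_covers y.
by exists u => //; exact: le_lt_trans u_near s_lt_r.
Qed.

Lemma lattice_coord_bound x r : B \in unitmx -> 0 <= r -> exists N : nat,
  forall k, vnorm nk (lattice_point k - x) < r -> forall i, `|k ord0 i| <= N%:Z.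
Proof.
move=> B_unit r_ge0.
pose M := (vnorm nk x + r) * \sum_i \sum_j `|invmx B j i|.
have M_ge0 : 0 <= M.
  by rewrite mulr_ge0 ?addr_ge0 ?vnorm_ge0 // sumr_ge0 // => ? _; exact: sumr_ge0.
exists (Num.Def.archi_bound M) => k near_x i.
have k_coord : (k ord0 i)%:~R = \sum_j lattice_point k ord0 j * invmx B j i.
  have := congr1 (fun A : 'rV[R]_d => A ord0 i) (mulmxK B_unit (map_mx intr k)).
  by rewrite [in X in X = _]mxE [in X in _ = X]mxE => <-.
have lp_bound j : `|lattice_point k ord0 j| <= vnorm nk x + r.
  rewrite (le_trans (coord_le_vnorm nk _ j)) // -[lattice_point k](subrK x).
  by rewrite (le_trans (vnormD _ _ _)) // addrC lerD2l ltW.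
have : `|k ord0 i|%:~R <= M.
  rewrite intr_norm k_coord (le_trans (ler_norm_sum _ _ _)) //.
  apply: (@le_trans _ _ ((vnorm nk x + r) * \sum_j `|invmx B j i|)).
    by rewrite mulr_sumr ler_sum // => j _; rewrite normrM ler_wpM2r.
  rewrite ler_wpM2l ?addr_ge0 ?vnorm_ge0 // [leRHS](bigD1 i) //= lerDl.
  by apply: sumr_ge0 => ? _; exact: sumr_ge0.
move=> /le_lt_trans /(_ (archi_boundP M_ge0)).
by rewrite pmulrn ltr_int => /ltW.
Qed.

Lemma lattice_ball_finite x r : B \in unitmx -> 0 <= r -> exists s : seq 'rV[int]_d,
  forall k, vnorm nk (lattice_point k - x) < r -> k \in s.
Proof.
move=> B_unit r_ge0; have [N k_bound] := lattice_coord_bound x B_unit r_ge0.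
by have [s s_box] := int_box_finite d N; exists s => k /k_bound /s_box.
Qed.

Lemma lattice_ball_meets_halfspace r :
  0 < cover_radius nk B -> 2 * cover_radius nk B < r -> forall x u,
  exists k, vnorm nk (lattice_point k - x) < r /\ 0 <= dot u (lattice_point k - x).
Proof.
move=> cover_gt0 cover_lt x u.
have [v [v_le1 uv_ge0 v_dual]] := dual_vector nk u.
set y := x + (r / 2) *: v.
have r_gt0 : 0 < r by lra.
have cover_lt_half : cover_radius nk B < r / 2 by lra.
have [_ [k ->] near_y] := approx_within_cover_radius cover_gt0 cover_lt_half y.
rewrite -/(lattice_point k) vdistC in near_y.
exists k; have -> : lattice_point k - x = (lattice_point k - y) + (r / 2) *: v.
  by rewrite /y opprD addrA subrK.
split.
  rewrite (le_lt_trans (vnormD _ _ _)) // vnormZ ger0_norm ?divr_ge0 ?ltW //.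
  have := vnorm_ge0 nk v; nra.
rewrite dotDr dotZr; have := v_dual (lattice_point k - y).
rewrite ler_norml => /andP[lower _]; have := vnorm_ge0 nk (lattice_point k - y); nra.
Qed.

Lemma lattice_convex_combination r :
  B \in unitmx -> 0 < cover_radius nk B -> 2 * cover_radius nk B < r ->
  forall x, exists s : seq (R * 'rV[int]_d),
    [/\ forall o, o \in s -> 0 <= o.1, \sum_(o <- s) o.1 = 1,
        \sum_(o <- s) o.1 *: lattice_point o.2 = x
      & forall o, o \in s -> vnorm nk (lattice_point o.2 - x) < r].
Proof.
move=> B_unit cover_gt0 cover_lt x.
have r_ge0 : 0 <= r by lra.
have [s0 s0_ball] := lattice_ball_finite x B_unit r_ge0.
pose L := [seq k <- s0 | vnorm nk (lattice_point k - x) < r].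
pose a (i : 'I_(size L)) := lattice_point (nth 0 L i) - x.
have L_near (i : 'I_(size L)) : vnorm nk (a i) < r.
  by have := mem_nth 0 (ltn_ord i); rewrite mem_filter => /andP[].
have [[w [w_ge0 w_sum1 w_bar]]|[u u_sep]] := gordan a.
  exists [seq (w i, nth 0 L i) | i <- enum 'I_(size L)].
  rewrite !big_map /=; split=> //.
  - by move=> _ /mapP[i _ ->]; exact: w_ge0.
  - move: w_bar; rewrite /a /=; under eq_bigr do rewrite scalerBr.
    by rewrite sumrB -scaler_suml w_sum1 scale1r => /eqP; rewrite subr_eq0 => /eqP.
  - by move=> _ /mapP[i _ ->]; exact: L_near.
have [k [k_near k_dot]] := lattice_ball_meets_halfspace cover_gt0 cover_lt x u.
have k_L : k \in L by rewrite mem_filter k_near s0_ball.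
have k_idx : (index k L < size L)%N by rewrite index_mem.
by have := u_sep (Ordinal k_idx); rewrite /a /= nth_index // ltNge k_dot.
Qed.

Lemma residue_class_sep q (q_gt0 : (0 < q)%N) k k' :
  residue q_gt0 k = residue q_gt0 k' -> lattice_point k != lattice_point k' ->
  2 * q%:R * packing_radius nk B <= vnorm nk (lattice_point k - lattice_point k').
Proof.
move=> /residue_eq[m km] k_neq_k'.
have diff : lattice_point k - lattice_point k' = q%:R *: lattice_point m.
  by rewrite -lattice_pointB km lattice_pointZ.
have m_neq0 : lattice_point m != lattice_point 0.
  rewrite lattice_point0; apply: contraNneq k_neq_k' => m0.
  by rewrite -subr_eq0 diff m0 scaler0.
have := packing_radius_le_dist (lattice_point_in m) (lattice_point_in 0) m_neq0.
rewrite lattice_point0 subr0 => m_far.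
by rewrite diff vnormZ ger0_norm // [2 * _]mulrC -mulrA ler_pM2l ?ltr0n.
Qed.

End Lattice.

Unset Implicit Arguments.

Theorem lemma14 (R : realType) (nk : normKind) (d : nat) (B : 'M[R]_d)
    (eps : R) (q : nat) :
  0 < eps -> (0 < q)%N -> eps_lattice nk B eps ->
  exists (dec : (nbits d q).-tuple bool -> set 'rV[R]_d)
         (Q : 'rV[R]_d -> seq (R * ((nbits d q).-tuple bool * 'rV[R]_d))),
    forall x : 'rV[R]_d,
      is_distr (Q x) /\
      \sum_(o <- Q x) o.1 *: o.2.2 = x /\
      forall o, o \in Q x -> 0 < o.1 ->
        dec o.2.1 `<=` lattice B /\
        dec o.2.1 o.2.2 /\
        vnorm nk (o.2.2 - x) < 7 * eps /\
        (forall w, dec o.2.1 w -> w != o.2.2 ->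
           2 * q%:R * eps <= vnorm nk (o.2.2 - w)).
Proof.
move=> eps_gt0 q_gt0 [B_unit [pack_eps [cover_ge cover_le]]].
have cover_gt0 : 0 < cover_radius nk B by exact: lt_le_trans cover_ge.
have cover_lt : 2 * cover_radius nk B < 7 * eps by lra.
have [S S_spec] := choice (lattice_convex_combination B_unit cover_gt0 cover_lt).
have [enc enc_inj] : exists enc : {ffun 'I_d -> 'I_q} -> (nbits d q).-tuple bool,
    injective enc.
  by apply: bits_embedding; rewrite card_ffun !card_ord; exact: up_logP.
pose code k := enc (residue q_gt0 k).
pose dec t := [set z | exists2 k, z = lattice_point B k & code k = t].
exists dec, (fun x => [seq (o.1, (code o.2, lattice_point B o.2)) | o <- S x]) => x.
have [w_ge0 w_sum1 w_mean w_near] := S_spec x.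
rewrite /is_distr !big_map; split; first by split=> // _ /mapP[o /w_ge0 ? ->].
split=> // _ /mapP[[w k] wk_in ->] _ /=; split; [|split; [|split]].
- by move=> _ [k' -> _]; exact: lattice_point_in.
- by exists k.
- exact: w_near _ wk_in.
- move=> _ [k' -> /enc_inj res_eq] k_neq_k'.
  by rewrite -pack_eps residue_class_sep // eq_sym.
Qed.
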